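(* Let $m\ge1$ and $n\ge1$ be integers. For $0\le s\le m-1$ define $$G_{m,s}(q)=\frac{\prod_{j=0}^{s}(1+q^{m-j})}{(1-q)^{2s}}\sum_{k=0}^{s}\frac{(-1)^{s-k}}{1+q^{m-k}}\binom{2m}{k}\sum_{i=0}^{s-k}\frac{m-k}{m-s}\binom{m-s+i-1}{i}\binom{m-k-i-1}{s-k-i}q^{s-k-i}.$$ Then each $G_{m,s}(q)$ is a polynomial in $\mathbb{Z}[q]$, and $$T_{2m,n}(q)=\sum_{k=0}^{m-1}(-1)^kG_{m,k}(q)\frac{(1-q^n)^{m-k}(1-q^{n+1})^{m-k}q^{kn}}{(1-q)^{2m-2k}\prod_{i=0}^{k}(1+q^{m-i})}.$$
   Context: $q$ is an indeterminate and $q^{1/2}$ a fixed formal square root of $q$; identities are identities of rational functions in $q^{1/2}$. For integers $m,n\ge1$, $$T_{m,n}(q)=\sum_{k=1}^{n}(-1)^{n-k}\left(\frac{1-q^k}{1-q}\right)^{m}q^{\frac m2(n-k)}.$$ Binomial coefficients $\binom{a}{b}$ with integers $a,b$ are taken to be $0$ when $b<0$ or when $0\le a<b$. *)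

From HB Require Import structures.
From mathcomp Require Import all_boot all_order all_algebra fraction.
Set Implicit Arguments. Unset Strict Implicit. Unset Printing Implicit Defensive.
Import Order.TTheory GRing.Theory Num.Theory.
Local Open Scope ring_scope.

(* The field of rational functions Q(q^{1/2}) is realised as the fraction
   field of Z[t], with t = q^{1/2} an indeterminate and q := t^2. *)
Definition K : Type := {fraction {poly int}}.
Definition t : K := @FracField.tofrac _ ('X : {poly int}).
Definition q : K := t ^+ 2.

(* T_{m,n}(q) = sum_{k=1}^n (-1)^{n-k} ((1-q^k)/(1-q))^m q^{m/2 (n-k)},
   with q^{m/2 (n-k)} = t^{m (n-k)}. *)
Definition Tmn (m n : nat) : K :=
  \sum_(1 <= k < n.+1)
     (-1) ^+ (n - k) * ((1 - q ^+ k) / (1 - q)) ^+ m * t ^+ (m * (n - k)).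

(* G_{m,s}(q), for 0 <= s <= m-1 (all nat subtractions below are then exact). *)
Definition Gms (m s : nat) : K :=
  (\prod_(0 <= j < s.+1) (1 + q ^+ (m - j))) / (1 - q) ^+ (2 * s) *
  \sum_(0 <= k < s.+1)
     ((-1) ^+ (s - k) / (1 + q ^+ (m - k)) * ('C(2 * m, k))%:R *
      \sum_(0 <= i < (s - k).+1)
         ((m - k)%:R / (m - s)%:R * ('C(m - s + i - 1, i))%:R *
          ('C(m - k - i - 1, s - k - i))%:R * q ^+ (s - k - i))).

Definition evalq (p : {poly int}) : K := (map_poly (fun c : int => c%:~R) p).[q].

From HB Require Import structures.
From mathcomp Require Import all_boot all_order all_algebra fraction.
From mathcomp Require Import ring zify.
Import Order.TTheory GRing.Theory Num.Theory.
Set Implicit Arguments. Unset Strict Implicit. Unset Printing Implicit Defensive.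
Local Open Scope ring_scope.

(* Let [R_m(u)] be the right-hand side with [q^n] replaced by [u].  The inner sums of
   [G_{m,s}] are coefficients of [(1 - q x^2) / ((1 - x) (1 - q x))^(N+1)]; resumming with
   these generating functions gives
     [R_m(u) = (1-q)^(-2m) sum_(j<m) (-1)^j C(2m,j) u^j (1 - u^(m-j)) (1 - (q u)^(m-j)) / (1 + q^(m-j))],
   and the binomial theorem then yields [R_m(u) + q^m R_m(u/q) = ((1 - u) / (1 - q))^(2m)].
   Since [T_{2m,n+1} + q^m T_{2m,n}] is that right-hand side at [u = q^(n+1)] and both
   [T_{2m,0}] and [R_m(1)] vanish, [T_{2m,n} = R_m(q^n)].
   For integrality, substitute [u = (z-1)/(z-q)]: the functional equation becomes the
   polynomial identity [sum_k c_k X^k L_(m-k)(X) = 1] in [X = (z-1)(z-q)], where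
   [c_k = (-1)^k G_{m,k} / prod_(i<=k) (1 + q^(m-i))] and [L_r(X) = z^r + (1+q-z)^r] is a
   Lucas polynomial.  As [L_r] has coefficients in [Z[q]] and constant term [1 + q^r],
   comparing coefficients expresses [G_{m,s}] through the [G_{m,k}], [k < s], inside [Z[q]]. *)

Section Convolution.
Variable R : comNzRingType.
Implicit Types (f g h : nat -> R) (n : nat).

(* Sequences stand for formal power series; [shift f] is [x * f]. *)
Definition shift f n : R := if n is n'.+1 then f n' else 0.

Definition conv f g n : R := \sum_(i < n.+1) f i * g (n - i)%N.

Lemma eq_shift f g : f =1 g -> shift f =1 shift g.
Proof. by move=> efg [|n] /=. Qed.

Lemma eq_conv f f' g g' n : f =1 f' -> g =1 g' -> conv f g n = conv f' g' n.
Proof. by move=> ef eg; apply: eq_bigr => i _; rewrite ef eg. Qed.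

Lemma shiftD (a b : R) f g n :
  shift (fun k => a * f k + b * g k) n = a * shift f n + b * shift g n.
Proof. by case: n => [|n] /=; rewrite ?mulr0 ?addr0. Qed.

Lemma convC f g n : conv f g n = conv g f n.
Proof.
rewrite /conv (reindex_inj rev_ord_inj) /=; apply: eq_bigr => i _.
by rewrite subSS subKn 1?mulrC // -ltnS.
Qed.

Lemma conv_shiftl f g n : conv (shift f) g n = shift (conv f g) n.
Proof.
case: n => [|n]; first by rewrite /conv big_ord1 mul0r.
by rewrite /conv big_ord_recl mul0r add0r; apply: eq_bigr => i _; rewrite subSS.
Qed.

Lemma conv_shiftr f g n : conv f (shift g) n = shift (conv f g) n.
Proof. by rewrite convC conv_shiftl; apply: eq_shift => k; rewrite convC. Qed.

Lemma convBl f g h n : conv (fun i => f i - g i) h n = conv f h n - conv g h n.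
Proof. by rewrite /conv -sumrB; apply: eq_bigr => i _; rewrite mulrBl. Qed.

Lemma convBr f g h n : conv h (fun i => f i - g i) n = conv h f n - conv h g n.
Proof. by rewrite convC convBl !(convC h). Qed.

Lemma convZl (c : R) f h n : conv (fun i => c * f i) h n = c * conv f h n.
Proof. by rewrite /conv mulr_sumr; apply: eq_bigr => i _; rewrite mulrA. Qed.

Lemma convZr (c : R) f h n : conv h (fun i => c * f i) n = c * conv h f n.
Proof. by rewrite convC convZl convC. Qed.

(* The derivation rule [x (f g)' = (x f') g + f (x g')] on coefficients. *)
Lemma natr_conv f g n :
  n%:R * conv f g n = conv (fun i => i%:R * f i) g n + conv f (fun i => i%:R * g i) n.
Proof.
rewrite /conv mulr_sumr -big_split; apply: eq_bigr => i _ /=.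
have le_in : (i <= n)%N by rewrite -ltnS.
rewrite -{1}(subnKC le_in) natrD; ring.
Qed.

Lemma sum_shift (G : nat -> nat -> R) (H : nat -> R) M :
  \sum_(N < M.+1) shift (G N) (M - N)%N * H N = \sum_(N < M) G N (M.-1 - N)%N * H N.
Proof.
rewrite big_ord_recr /= subnn mul0r addr0; apply: eq_bigr => i _.
by have -> : (M - i = (M.-1 - i).+1)%N by have := ltn_ord i; lia.
Qed.

End Convolution.

Section NegativeBinomial.
Variables (R : comNzRingType) (w : R).
Implicit Types (N i n : nat).

(* [nbinom N], [nbinomw N] and [nbconv N] are the coefficient sequences of [(1 - x)^-N],
   [(1 - w x)^-N] and of their product. *)
Definition nbinom N i : R := ('C(N + i - 1, i))%:R.
Definition nbinomw N i : R := nbinom N i * w ^+ i.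
Definition nbconv N := conv (nbinom N) (nbinomw N).

Lemma nbinomS N i : nbinom N i = nbinom N.+1 i - shift (nbinom N.+1) i.
Proof.
case: i => [|i]; rewrite /nbinom /= ?bin0 ?subr0 //.
have -> : (N.+1 + i.+1 - 1 = (N + i).+1)%N by lia.
have -> : (N + i.+1 - 1 = N + i)%N by lia.
have -> : (N.+1 + i - 1 = N + i)%N by lia.
by rewrite binS natrD addrK.
Qed.

Lemma nbinomwS N i : nbinomw N i = nbinomw N.+1 i - w * shift (nbinomw N.+1) i.
Proof.
case: i => [|i]; rewrite /nbinomw /= ?mulr0 ?subr0; first by rewrite /nbinom !bin0.
rewrite nbinomS /= exprS; ring.
Qed.

Lemma natr_nbinom N i : i%:R * nbinom N i = N%:R * shift (nbinom N.+1) i.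
Proof.
case: i => [|i]; rewrite /nbinom /= ?mul0r ?mulr0 //.
have -> : (N + i.+1 - 1 = N + i)%N by lia.
have -> : (N.+1 + i - 1 = N + i)%N by lia.
by rewrite -!natrM mul_bin_left addnK mulnC.
Qed.

Lemma natr_nbinomw N i : i%:R * nbinomw N i = N%:R * w * shift (nbinomw N.+1) i.
Proof.
case: i => [|i]; rewrite /nbinomw /= ?mul0r ?mulr0 //.
rewrite mulrA (natr_nbinom N i.+1) /= exprS; ring.
Qed.

Lemma nbconvS N n : nbconv N n =
  nbconv N.+1 n - (1 + w) * shift (nbconv N.+1) n + w * shift (shift (nbconv N.+1)) n.
Proof.
rewrite /nbconv (eq_conv n (@nbinomS N) (@nbinomwS N)).
rewrite convBl !convBr !convZr !conv_shiftl conv_shiftr (eq_shift (conv_shiftr _ _)).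
by case: n => [|[|n]] /=; ring.
Qed.

Lemma natr_nbconv N n : n%:R * nbconv N n =
  N%:R * ((1 + w) * shift (nbconv N.+1) n - 2%:R * w * shift (shift (nbconv N.+1)) n).
Proof.
rewrite /nbconv natr_conv (eq_conv n (@natr_nbinom N) (frefl _)).
rewrite (eq_conv n (frefl _) (@natr_nbinomw N)) convZl convZr conv_shiftl conv_shiftr.
have e1 : conv (nbinom N.+1) (nbinomw N) =1 (fun k =>
    1 * conv (nbinom N.+1) (nbinomw N.+1) k + (- w) * shift (conv (nbinom N.+1) (nbinomw N.+1)) k).
  move=> k; rewrite (eq_conv k (frefl _) (@nbinomwS N)) convBr convZr conv_shiftr; ring.
have e2 : conv (nbinom N) (nbinomw N.+1) =1 (fun k =>
    1 * conv (nbinom N.+1) (nbinomw N.+1) k + (- 1) * shift (conv (nbinom N.+1) (nbinomw N.+1)) k).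
  move=> k; rewrite (eq_conv k (@nbinomS N) (frefl _)) convBl conv_shiftl; ring.
rewrite (eq_shift e1) (eq_shift e2) !shiftD; ring.
Qed.

(* [acoef N] is the coefficient sequence of [(1 - w x^2) / ((1 - x) (1 - w x))^(N+1)]. *)
Definition acoef N n : R := nbconv N.+1 n - w * shift (shift (nbconv N.+1)) n.

Lemma acoefS N n : acoef N n =
  acoef N.+1 n - (1 + w) * shift (acoef N.+1) n + w * shift (shift (acoef N.+1)) n.
Proof. by case: n => [|[|[|[|n]]]]; rewrite /acoef /= !(nbconvS N.+1) /=; ring. Qed.

Lemma nbconv_0 N : nbconv N 0 = 1.
Proof. by rewrite /nbconv /conv big_ord1 /nbinomw /nbinom bin0 !mul1r. Qed.

Lemma nbconv1S n : nbconv 1 n.+1 = nbconv 1 n + w ^+ n.+1.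
Proof.
rewrite /nbconv /conv big_ord_recl addrC; congr (_ + _).
  by apply: eq_bigr => i _; rewrite /nbinomw /nbinom /= subSS !add1n !subn1 /= !binn.
by rewrite /nbinomw /nbinom /= bin0 binn subn0 !mul1r.
Qed.

Lemma nbconv1Sr n : nbconv 1 n.+1 = w * nbconv 1 n + 1.
Proof.
rewrite /nbconv /conv big_ord_recr /=; congr (_ + _).
  rewrite mulr_sumr; apply: eq_bigr => i _; rewrite /nbinomw /nbinom /=.
  rewrite subSn; last by rewrite -ltnS.
  by rewrite !add1n !subn1 /= !binn exprS; ring.
by rewrite /nbinomw /nbinom add1n subn1 /= binn subnn bin0 !mul1r expr0.
Qed.

Lemma acoef0S n : acoef 0 n.+1 = 1 + w ^+ n.+1.
Proof.
rewrite /acoef nbconv1S; case: n => [|n] /=; first by rewrite mulr0 subr0 nbconv_0.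
by rewrite nbconv1Sr; ring.
Qed.

Lemma acoef10 : acoef 1 0 = 1.
Proof. by rewrite /acoef nbconv_0 /= mulr0 subr0. Qed.

End NegativeBinomial.

Section BinomialSum.
Variables (R : comNzRingType) (w u : R).

Definition bsum M : R := \sum_(N < M)
  acoef w N.+1 (M.-1 - N)%N * (((1 - u) * (1 - w * u)) ^+ N.+1 * u ^+ (M.-1 - N)%N).

Lemma bsumSS M : bsum M.+2 = (1 + w * u ^+ 2) * bsum M.+1 - w * u ^+ 2 * bsum M
  + (1 - u) * (1 - w * u) * acoef w 0 M.+1 * u ^+ M.+1.
Proof.
set P := (1 - u) * (1 - w * u).
pose S (a : nat -> nat -> R) := \sum_(N < M.+2) a N (M.+1 - N)%N * (P ^+ N.+1 * u ^+ (M.+1 - N)%N).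
have S0 : S (acoef w) = P * (acoef w 0 M.+1 * u ^+ M.+1 + bsum M.+1).
  rewrite /S big_ord_recl /bsum mulrDr mulr_sumr subn0 /=; congr (_ + _); first by ring.
  by apply: eq_bigr => i _ /=; rewrite subSS exprS; ring.
have S1 : S (fun N => shift (acoef w N.+1)) = u * bsum M.+1.
  rewrite /S /= (sum_shift (fun N => acoef w N.+1) (fun N => P ^+ N.+1 * u ^+ (M.+1 - N))).
  rewrite /bsum mulr_sumr; apply: eq_bigr => i _ /=.
  have -> : (M.+1 - i = (M - i).+1)%N by have := ltn_ord i; lia.
  by rewrite [u ^+ (M - i).+1]exprS; ring.
have S2 : S (fun N => shift (shift (acoef w N.+1))) = u ^+ 2 * bsum M.
  pose H N := P ^+ N.+1 * u ^+ (M.+1 - N).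
  rewrite /S /= (sum_shift (fun N => shift (acoef w N.+1)) H) /=.
  rewrite (sum_shift (fun N => acoef w N.+1) H) /bsum mulr_sumr /H; apply: eq_bigr => i _ /=.
  have -> : (M.+1 - i = (M.-1 - i).+2)%N by have := ltn_ord i; lia.
  by rewrite !exprS; ring.
have -> : bsum M.+2 = S (acoef w) + (1 + w) * S (fun N => shift (acoef w N.+1))
    - w * S (fun N => shift (shift (acoef w N.+1))).
  rewrite /S !mulr_sumr -big_split -sumrB /bsum /=; apply: eq_bigr => i _.
  by rewrite (acoefS w i); ring.
by rewrite S0 S1 S2 /P; ring.
Qed.

Lemma bsumE M : bsum M = (1 - u ^+ M) * (1 - (w * u) ^+ M).
Proof.
elim/ltn_ind: M => -[|[|M]] IH.
- by rewrite /bsum big_ord0 expr0 subrr mul0r.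
- by rewrite /bsum big_ord1 /= acoef10 expr1 expr0 !mulr1 mul1r expr1.
- by rewrite bsumSS !IH // acoef0S !exprMn !exprS; ring.
Qed.

End BinomialSum.

Lemma sum_nat_triangle (R : nmodType) m (f : nat -> nat -> R) :
  \sum_(0 <= k < m) \sum_(0 <= j < k.+1) f k j =
  \sum_(0 <= j < m) \sum_(0 <= r < m - j) f (r + j)%N j.
Proof.
transitivity (\sum_(0 <= k < m) \sum_(0 <= j < m) (if (j <= k)%N then f k j else 0)).
  apply: eq_big_nat => k /andP[_ ltkm].
  rewrite (big_nat_widen _ _ _ _ _ (ltkm : (k.+1 <= m)%N)) big_mkcond /=.
  by apply: eq_bigr => j _; rewrite ltnS.
rewrite exchange_big_nat; apply: eq_big_nat => j /andP[_ ltjm].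
rewrite (big_cat_nat (leq0n j) (ltnW ltjm)) /= big_nat_cond big1 ?add0r; last first.
  by move=> k /andP[/andP[_ ltkj] _]; rewrite leqNgt ltkj.
by rewrite -{1}(add0n j) big_addn; apply: eq_big_nat => r _; rewrite leq_addl.
Qed.

Lemma signr_subn (R : pzRingType) k j : (j <= k)%N ->
  (-1) ^+ k * (-1) ^+ (k - j) = (-1) ^+ j :> R.
Proof.
move=> lejk; rewrite -exprD.
have -> : (k + (k - j) = j + (k - j) * 2)%N by lia.
by rewrite exprD exprM sqrr_sign mulr1.
Qed.

Section AlternatingBinomial.
Variable R : comNzRingType.

Lemma alt_binom_prefix n k :
  \sum_(0 <= j < k.+1) (-1) ^+ j * ('C(n.+1, j))%:R = (-1) ^+ k * ('C(n, k))%:R :> R.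
Proof.
elim: k => [|k IH]; first by rewrite big_nat1 !bin0 expr0.
by rewrite big_nat_recr //= IH binS natrD exprS; ring.
Qed.

Lemma alt_binom_half m : (0 < m)%N ->
  2%:R * \sum_(0 <= j < m) (-1) ^+ j * ('C(2 * m, j))%:R = - ((-1) ^+ m * ('C(2 * m, m))%:R) :> R.
Proof.
case: m => [//|m] _.
have -> : (2 * m.+1 = (2 * m).+1.+1)%N by lia.
have binS_half : 'C((2 * m).+2, m.+1) = ('C((2 * m).+1, m) * 2)%N.
  rewrite binS; have -> : 'C((2 * m).+1, m.+1) = 'C((2 * m).+1, m).
    by rewrite -[in RHS]bin_sub; [congr 'C(_, _) | ]; lia.
  by rewrite addnn muln2.
by rewrite alt_binom_prefix binS_half natrM exprS; ring.
Qed.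

Lemma exprBn_central (x : R) m : (1 - x) ^+ (2 * m) =
  \sum_(0 <= j < m) (-1) ^+ j * ('C(2 * m, j))%:R * (x ^+ j + x ^+ (2 * m - j))
  + (-1) ^+ m * ('C(2 * m, m))%:R * x ^+ m.
Proof.
rewrite exprBn -(big_mkord xpredT (fun i => (-1) ^+ i * 1 ^+ (2 * m - i) * x ^+ i *+ 'C(2 * m, i))).
rewrite (big_cat_nat (leq0n m) (_ : (m <= (2 * m).+1)%N)); last by lia.
rewrite (big_cat_nat (_ : (m <= m.+1)%N) (_ : (m.+1 <= (2 * m).+1)%N)) //=; last by lia.
rewrite big_nat1 -{1}(add0n m.+1) big_addn.
have -> : ((2 * m).+1 - m.+1 = m)%N by lia.
rewrite [X in _ + (_ + X)]big_nat_rev.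
rewrite addrCA -big_split /= addrC; congr (_ + _).
  apply: eq_big_nat => j /andP[_ ltjm].
  rewrite add0n; have -> : (m - j.+1 + m.+1 = 2 * m - j)%N by lia.
  rewrite bin_sub; last by lia.
  have -> : (2 * m - j = j + (m - j) * 2)%N by lia.
  rewrite !expr1n !mulr1 exprD exprM sqrr_sign mulr1 -mulr_natr -[X in _ + X]mulr_natr; ring.
by rewrite expr1n mulr1 -mulr_natr; ring.
Qed.

Lemma alt_binom_sq_sum (x : R) m : (0 < m)%N ->
  \sum_(0 <= j < m) (-1) ^+ j * ('C(2 * m, j))%:R * (x ^+ j * (1 - x ^+ (m - j)) ^+ 2)
  = (1 - x) ^+ (2 * m).
Proof.
move=> m_gt0; rewrite exprBn_central.
have -> : (-1) ^+ m * ('C(2 * m, m))%:R * x ^+ m =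
    - \sum_(0 <= j < m) 2%:R * x ^+ m * ((-1) ^+ j * ('C(2 * m, j))%:R).
  by rewrite -mulr_sumr [in RHS]mulrAC alt_binom_half //; ring.
rewrite -sumrN -big_split /=; apply: eq_big_nat => j /andP[_ ltjm].
have -> : x ^+ m = x ^+ j * x ^+ (m - j) by rewrite -exprD; congr (_ ^+ _); lia.
have -> : x ^+ (2 * m - j) = x ^+ j * x ^+ (m - j) * x ^+ (m - j)
  by rewrite -!exprD; congr (_ ^+ _); lia.
ring.
Qed.

End AlternatingBinomial.

Section RationalIdentity.
Variables (F : fieldType) (w : F).
Hypothesis F_char0 : [pchar F] =i pred0.
Hypothesis onewX_neq0 : forall a, 1 + w ^+ a != 0.
(* Besides [w != 0] and [w != 1], this makes the points [(i - 1) (i - w)], [i : nat],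
   pairwise distinct. *)
Hypothesis w_notnat : forall i : nat, w != i%:R.

Lemma natr_neq0 N : (0 < N)%N -> N%:R != 0 :> F.
Proof. by move/pcharf0P: F_char0 => ->; rewrite -lt0n. Qed.

Lemma w_neq0 : w != 0.
Proof. exact: (w_notnat 0). Qed.

Lemma oneBw_neq0 : 1 - w != 0.
Proof. by rewrite subr_eq0 eq_sym (w_notnat 1). Qed.

Lemma prod_onewX_neq0 m a b : \prod_(a <= i < b) (1 + w ^+ (m - i)) != 0.
Proof. by rewrite prodf_seq_neq0; apply/allP => i _; rewrite onewX_neq0. Qed.

(* [Gms m s] is [Gw q m s] by conversion. *)
Definition Gw m s : F :=
  (\prod_(0 <= j < s.+1) (1 + w ^+ (m - j))) / (1 - w) ^+ (2 * s) *
  \sum_(0 <= k < s.+1)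
     ((-1) ^+ (s - k) / (1 + w ^+ (m - k)) * ('C(2 * m, k))%:R *
      \sum_(0 <= i < (s - k).+1)
         ((m - k)%:R / (m - s)%:R * ('C(m - s + i - 1, i))%:R *
          ('C(m - k - i - 1, s - k - i))%:R * w ^+ (s - k - i))).

Lemma acoefE N n : (0 < N)%N -> acoef w N n = (N + n)%:R / N%:R * nbconv w N n.
Proof.
move=> /natr_neq0 N_neq0; symmetry.
have -> : (N + n)%:R / N%:R * nbconv w N n = (N%:R * nbconv w N n + n%:R * nbconv w N n) / N%:R.
  by rewrite natrD; field.
by rewrite natr_nbconv {1}nbconvS /acoef; field.
Qed.

Lemma Gw_inner_sum m s k : (k <= s < m)%N ->
  \sum_(0 <= i < (s - k).+1)
      ((m - k)%:R / (m - s)%:R * ('C(m - s + i - 1, i))%:R *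
       ('C(m - k - i - 1, s - k - i))%:R * w ^+ (s - k - i))
  = acoef w (m - s) (s - k).
Proof.
case/andP=> leks ltsm.
rewrite acoefE ?subn_gt0 // /nbconv /conv mulr_sumr big_mkord; apply: eq_bigr => i _.
have lei : (i <= s - k)%N by rewrite -ltnS.
rewrite /nbinomw /nbinom.
have -> : (m - s + (s - k) = m - k)%N by lia.
have -> : (m - s + (s - k - i) - 1 = m - k - i - 1)%N by lia.
ring.
Qed.

Definition Rsum m (u : F) : F :=
  \sum_(0 <= k < m)
      (-1) ^+ k * Gw m k *
      ((1 - u) ^+ (m - k) * (1 - w * u) ^+ (m - k) * u ^+ k) /
      ((1 - w) ^+ (2 * m - 2 * k) * \prod_(0 <= i < k.+1) (1 + w ^+ (m - i))).

Definition rcoef m j : F := (-1) ^+ j * ('C(2 * m, j))%:R / (1 + w ^+ (m - j)).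

Lemma Rsum_termE m k (u : F) : (k < m)%N ->
  (-1) ^+ k * Gw m k *
      ((1 - u) ^+ (m - k) * (1 - w * u) ^+ (m - k) * u ^+ k) /
      ((1 - w) ^+ (2 * m - 2 * k) * \prod_(0 <= i < k.+1) (1 + w ^+ (m - i)))
  = ((1 - w) ^+ (2 * m))^-1 * \sum_(0 <= j < k.+1)
      rcoef m j * (acoef w (m - k) (k - j) * (((1 - u) * (1 - w * u)) ^+ (m - k) * u ^+ k)).
Proof.
move=> ltkm; rewrite /Gw.
set P := \prod_(0 <= j < k.+1) _; set S := \sum_(0 <= j < k.+1) _.
have -> : (1 - w) ^+ (2 * m) = (1 - w) ^+ (2 * k) * (1 - w) ^+ (2 * m - 2 * k).
  by rewrite -exprD; congr (_ ^+ _); lia.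
have -> : (-1) ^+ k * (P / (1 - w) ^+ (2 * k) * S) *
    ((1 - u) ^+ (m - k) * (1 - w * u) ^+ (m - k) * u ^+ k) /
    ((1 - w) ^+ (2 * m - 2 * k) * P)
  = ((1 - w) ^+ (2 * k) * (1 - w) ^+ (2 * m - 2 * k))^-1 *
    ((-1) ^+ k * S * (((1 - u) * (1 - w * u)) ^+ (m - k) * u ^+ k)).
  by rewrite exprMn; field; rewrite prod_onewX_neq0 !expf_neq0 ?oneBw_neq0.
congr (_ * _); rewrite /S mulr_sumr mulr_suml; apply: eq_big_nat => j /andP[_ ltjk].
rewrite Gw_inner_sum; last by rewrite ltkm andbT -ltnS.
by rewrite /rcoef -(signr_subn F (ltnSE ltjk)); ring.
Qed.

Lemma sum_acoef_bsum m j (u : F) : (j < m)%N ->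
  \sum_(0 <= r < m - j)
     acoef w (m - (r + j)) (r + j - j) * (((1 - u) * (1 - w * u)) ^+ (m - (r + j)) * u ^+ (r + j))
  = u ^+ j * bsum w u (m - j).
Proof.
move=> ltjm; rewrite /bsum mulr_sumr big_mkord (reindex_inj rev_ord_inj) /=.
apply: eq_bigr => r _; have ltr := ltn_ord r.
have -> : (m - (m - j - r.+1 + j) = r.+1)%N by lia.
have -> : (m - j - r.+1 + j - j = (m - j).-1 - r)%N by lia.
have -> : (m - j - r.+1 + j = j + ((m - j).-1 - r))%N by lia.
by rewrite exprD; ring.
Qed.

Lemma RsumE m (u : F) : Rsum m u = ((1 - w) ^+ (2 * m))^-1 *
  \sum_(0 <= j < m) rcoef m j * (u ^+ j * ((1 - u ^+ (m - j)) * (1 - (w * u) ^+ (m - j)))).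
Proof.
rewrite /Rsum (eq_big_nat _ _ (fun k lt => Rsum_termE u (andP lt).2)) -mulr_sumr.
congr (_ * _); rewrite sum_nat_triangle; apply: eq_big_nat => j /andP[_ ltjm].
by rewrite -mulr_sumr sum_acoef_bsum // bsumE.
Qed.

Lemma Rsum_dilation m (u : F) : (0 < m)%N ->
  Rsum m u + w ^+ m * Rsum m (u / w) = ((1 - u) / (1 - w)) ^+ (2 * m).
Proof.
move=> m_gt0; rewrite !RsumE // expr_div_n mulrCA -mulrDr mulrC; congr (_ * _).
rewrite -(alt_binom_sq_sum u m_gt0) mulr_sumr -big_split /=.
apply: eq_big_nat => j /andP[_ ltjm].
have -> : w ^+ m = w ^+ j * w ^+ (m - j) by rewrite -exprD; congr (_ ^+ _); lia.
have -> : w * (u / w) = u by rewrite mulrC divfK ?w_neq0.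
rewrite /rcoef !expr_div_n !exprMn.
have wj_neq0 : w ^+ j != 0 by rewrite expf_neq0 ?w_neq0.
have wmj_neq0 : w ^+ (m - j) != 0 by rewrite expf_neq0 ?w_neq0.
move: (w ^+ j) (w ^+ (m - j)%N) (u ^+ j) (u ^+ (m - j)%N) (onewX_neq0 (m - j)) wj_neq0 wmj_neq0.
by move=> a b c d h1 h2 h3; field; rewrite h1 h2 h3.
Qed.

Definition cG m k : F := (-1) ^+ k * Gw m k / \prod_(0 <= i < k.+1) (1 + w ^+ (m - i)).

Definition Rterm m k (u : F) : F :=
  (1 - u) ^+ (m - k) * (1 - w * u) ^+ (m - k) * u ^+ k / (1 - w) ^+ (2 * m - 2 * k).

Lemma Rsum_cG m (u : F) : Rsum m u = \sum_(0 <= k < m) cG m k * Rterm m k u.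
Proof.
apply: eq_big_nat => k _; rewrite /cG /Rterm.
move: (prod_onewX_neq0 m 0 k.+1) (expf_neq0 (2 * m - 2 * k) oneBw_neq0).
move: (\prod_(0 <= i < k.+1) _) ((1 - w) ^+ (2 * m - 2 * k)) => P Y P_neq0 Y_neq0.
by field; rewrite P_neq0 Y_neq0.
Qed.

(* The substitution [u = (z - 1) / (z - w)] turns the pair [u, u / w] into the pair of
   roots [z, 1 + w - z] of a quadratic depending only on [(z - 1) (z - w)]. *)
Lemma Rterm_subst m k z u : (k < m)%N -> z - w != 0 -> u = (z - 1) / (z - w) ->
  (z - w) ^+ (2 * m) * (Rterm m k u + w ^+ m * Rterm m k (u / w))
  = ((z - 1) * (z - w)) ^+ k * (z ^+ (m - k) + (1 + w - z) ^+ (m - k)).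
Proof.
move=> ltkm zBw_neq0 uE; rewrite /Rterm.
have wN0 := w_neq0.
have -> : w * (u / w) = u by field.
have -> : 1 - u = (1 - w) / (z - w) by rewrite uE; field.
have -> : 1 - w * u = (1 - w) * z / (z - w) by rewrite uE; field.
have -> : 1 - u / w = (1 - w) * (1 + w - z) / (w * (z - w)).
  by rewrite uE; field; rewrite wN0 zBw_neq0.
have -> : u / w = (z - 1) / (w * (z - w)) by rewrite uE; field; rewrite wN0 zBw_neq0.
have -> : (z - w) ^+ (2 * m) =
    (z - w) ^+ (m - k) * (z - w) ^+ (m - k) * ((z - w) ^+ k * (z - w) ^+ k).
  by rewrite -!exprD; congr (_ ^+ _); lia.
have -> : (1 - w) ^+ (2 * m - 2 * k) = (1 - w) ^+ (m - k) * (1 - w) ^+ (m - k).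
  by rewrite -!exprD; congr (_ ^+ _); lia.
have -> : w ^+ m = w ^+ (m - k) * w ^+ k by rewrite -!exprD; congr (_ ^+ _); lia.
rewrite uE !expr_div_n !exprMn.
move: (expf_neq0 (m - k) zBw_neq0) (expf_neq0 k zBw_neq0) (expf_neq0 (m - k) oneBw_neq0).
move: (expf_neq0 (m - k) w_neq0) (expf_neq0 k w_neq0).
move: ((z - w) ^+ (m - k)%N) ((z - w) ^+ k) ((1 - w) ^+ (m - k)%N) (w ^+ (m - k)%N) (w ^+ k).
by move=> A B C D E h1 h2 h3 h4 h5; field; rewrite h1 h2 h3 h4 h5.
Qed.

Lemma sum_cG_subst m z : (0 < m)%N -> z - w != 0 ->
  \sum_(0 <= k < m) cG m k * ((z - 1) * (z - w)) ^+ k * (z ^+ (m - k) + (1 + w - z) ^+ (m - k))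
  = 1.
Proof.
move=> m_gt0 zBw_neq0; have oBwN0 := oneBw_neq0.
have := Rsum_dilation ((z - 1) / (z - w)) m_gt0; rewrite !Rsum_cG.
have -> : (1 - (z - 1) / (z - w)) / (1 - w) = (z - w)^-1.
  by field; rewrite oBwN0 zBw_neq0.
move=> eR; transitivity ((z - w) ^+ (2 * m) * (z - w)^-1 ^+ (2 * m)); last first.
  by rewrite -exprMn mulfV // expr1n.
rewrite -eR.
rewrite [w ^+ m * _]mulr_sumr -big_split mulr_sumr /=; apply: eq_big_nat => k /andP[_ ltkm].
by rewrite -mulrA -(Rterm_subst ltkm zBw_neq0 (erefl _)); ring.
Qed.

Lemma natr_eq_char0 (i j : nat) : (i%:R == j%:R :> F) = (i == j).
Proof.
have ltF a b : (a < b)%N -> (a%:R == b%:R :> F) = false.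
  move=> ltab; rewrite eq_sym -subr_eq0 -natrB ?(ltnW ltab) //.
  by move/pcharf0P: F_char0 => ->; rewrite subn_eq0 leqNgt ltab.
case: (ltngtP i j) => [ltij | ltji | ->]; last by rewrite !eqxx.
  by rewrite ltF // ltn_eqF.
by rewrite eq_sym ltF // gtn_eqF.
Qed.

Lemma nat_subst_inj : injective (fun i : nat => (i%:R - 1) * (i%:R - w)).
Proof.
move=> i j /= eij; apply/eqP; apply: contraT => neij.
have ij_gt0 : (0 < i + j)%N by move: neij; lia.
have : (i%:R - j%:R) * (((i + j).-1)%:R - w) = 0 :> F.
  rewrite -subn1 natrB // natrD.
  transitivity ((i%:R - 1) * (i%:R - w) - (j%:R - 1) * (j%:R - w) : F); first by ring.
  by rewrite eij subrr.
move/eqP; rewrite mulf_eq0 !subr_eq0 natr_eq_char0 (negbTE neij) /= eq_sym.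
by rewrite (negbTE (w_notnat _)).
Qed.

(* [lucas r] is the power sum of order [r] of the roots of [Y^2 - (1 + w) Y + (w - X)]. *)
Fixpoint lucas r : {poly F} :=
  match r with
  | 0 => (2%:R)%:P
  | 1 => (1 + w)%:P
  | (r'.+1 as r1).+1 => (1 + w)%:P * lucas r1 - (w%:P - 'X) * lucas r'
  end.

Lemma lucasSS r : lucas r.+2 = (1 + w)%:P * lucas r.+1 - (w%:P - 'X) * lucas r.
Proof. by []. Qed.

Lemma lucas_subst r z : (lucas r).[(z - 1) * (z - w)] = z ^+ r + (1 + w - z) ^+ r.
Proof.
elim/ltn_ind: r => -[|[|r]] IH.
- by rewrite (_ : lucas 0 = (2%:R)%:P) // hornerC; ring.
- by rewrite (_ : lucas 1 = (1 + w)%:P) // hornerC; ring.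
- by rewrite lucasSS !hornerE !IH // !exprS; ring.
Qed.

Lemma lucas_coef0 r : (lucas r)`_0 = 1 + w ^+ r.
Proof.
rewrite -horner_coef0 (_ : 0 = (1 - 1) * (1 - w)); last by rewrite subrr mul0r.
by rewrite lucas_subst expr1n; congr (_ + _ ^+ _); ring.
Qed.

Definition Hpoly m : {poly F} := \sum_(0 <= k < m) (cG m k)%:P * ('X^k * lucas (m - k)).

Lemma Hpoly_subst m z : (0 < m)%N -> z - w != 0 -> (Hpoly m).[(z - 1) * (z - w)] = 1.
Proof.
move=> m_gt0 zBw_neq0; rewrite horner_sum -[RHS](sum_cG_subst m_gt0 zBw_neq0).
by apply: eq_big_nat => k _; rewrite hornerCM hornerM hornerXn lucas_subst mulrA.
Qed.

Lemma Hpoly_eq1 m : (0 < m)%N -> Hpoly m = 1.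
Proof.
move=> m_gt0; apply/eqP; rewrite -subr_eq0; apply/negPn/negP => H1_neq0.
pose rs := [seq (i%:R - 1) * (i%:R - w) | i <- iota 0 (size (Hpoly m - 1))].
have roots_rs : all (root (Hpoly m - 1)) rs.
  apply/allP => _ /mapP[i _ ->]; rewrite /root hornerD hornerN hornerC.
  by rewrite Hpoly_subst ?subrr // subr_eq0 eq_sym.
have uniq_rs : uniq rs by rewrite map_inj_uniq ?iota_uniq //; exact: nat_subst_inj.
by have := max_poly_roots H1_neq0 roots_rs uniq_rs; rewrite size_map size_iota ltnn.
Qed.

Lemma cG_rec m s : (s < m)%N ->
  cG m s * (1 + w ^+ (m - s)) =
  (s == 0)%:R - \sum_(0 <= k < s) cG m k * (lucas (m - k))`_(s - k).
Proof.
move=> ltsm; have := congr1 (fun p : {poly F} => p`_s) (Hpoly_eq1 (leq_ltn_trans (leq0n s) ltsm)).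
rewrite coef1 /Hpoly coef_sum => <-.
rewrite (big_cat_nat (leq0n s) (ltnW ltsm)) (@big_cat_nat _ _ _ s.+1 s m) //= big_nat1.
rewrite [X in _ + (_ + X)]big_nat_cond [X in _ + (_ + X)]big1; last first.
  by move=> k /andP[/andP[ltsk _] _]; rewrite coefCM coefXnM ltsk mulr0.
rewrite coefCM coefXnM ltnn subnn lucas_coef0 addr0.
have -> : \sum_(0 <= k < s) ((cG m k)%:P * ('X^k * lucas (m - k)))`_s =
    \sum_(0 <= k < s) cG m k * (lucas (m - k))`_(s - k).
  by apply: eq_big_nat => k /andP[_ ltks]; rewrite coefCM coefXnM ltnNge (ltnW ltks).
by rewrite addrC addrK.
Qed.

Lemma Gw_rec m s : (s < m)%N ->
  Gw m s = (-1) ^+ s * ((s == 0)%:R * \prod_(0 <= i < s) (1 + w ^+ (m - i)) -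
     \sum_(0 <= k < s) (-1) ^+ k * Gw m k * \prod_(k.+1 <= i < s) (1 + w ^+ (m - i))
        * (lucas (m - k))`_(s - k)).
Proof.
move=> ltsm.
have cGE k : (-1) ^+ k * Gw m k = cG m k * \prod_(0 <= i < k.+1) (1 + w ^+ (m - i)).
  by rewrite /cG divfK ?prod_onewX_neq0.
have -> : Gw m s =
    (-1) ^+ s * (cG m s * (1 + w ^+ (m - s)) * \prod_(0 <= i < s) (1 + w ^+ (m - i))).
  by rewrite -[LHS](signrMK s (Gw m s)) /= cGE big_nat_recr //=; ring.
rewrite cG_rec // mulrBl mulr_suml; congr (_ * (_ - _)).
apply: eq_big_nat => k /andP[_ ltks].
by rewrite cGE (big_cat_nat (leq0n k.+1) ltks) /=; ring.
Qed.

Definition in_Zw (x : F) := exists p : {poly int}, x = (map_poly (fun c : int => c%:~R) p).[w].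

Lemma in_Zw_int (c : int) : in_Zw c%:~R.
Proof. by exists c%:P; rewrite map_polyC hornerC. Qed.

Lemma in_Zw_nat n : in_Zw n%:R.
Proof. by rewrite pmulrn; exact: in_Zw_int. Qed.

Lemma in_Zw_w : in_Zw w.
Proof. by exists 'X; rewrite map_polyX hornerX. Qed.

Lemma in_ZwB x y : in_Zw x -> in_Zw y -> in_Zw (x - y).
Proof. by move=> [p ->] [r ->]; exists (p - r); rewrite rmorphB hornerD hornerN. Qed.

Lemma in_ZwM x y : in_Zw x -> in_Zw y -> in_Zw (x * y).
Proof. by move=> [p ->] [r ->]; exists (p * r); rewrite rmorphM hornerM. Qed.

Lemma in_ZwD x y : in_Zw x -> in_Zw y -> in_Zw (x + y).
Proof.
move=> Zx Zy; have -> : x + y = x - (0 - y) by rewrite sub0r opprK.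
by apply/in_ZwB/in_ZwB => //; exact: (in_Zw_nat 0).
Qed.

Lemma in_Zw_sum I r (P : pred I) (f : I -> F) :
  (forall i, P i -> in_Zw (f i)) -> in_Zw (\sum_(i <- r | P i) f i).
Proof. exact: (big_ind in_Zw (in_Zw_nat 0) in_ZwD). Qed.

Lemma in_Zw_prod I r (P : pred I) (f : I -> F) :
  (forall i, P i -> in_Zw (f i)) -> in_Zw (\prod_(i <- r | P i) f i).
Proof. exact: (big_ind in_Zw (in_Zw_nat 1) in_ZwM). Qed.

Lemma in_ZwX x n : in_Zw x -> in_Zw (x ^+ n).
Proof. by move=> Zx; rewrite -[n]card_ord -prodr_const; apply: in_Zw_prod. Qed.

Lemma lucas_coef_in_Zw r i : in_Zw (lucas r)`_i.
Proof.
have Z1w : in_Zw (1 + w) by apply: in_ZwD (in_Zw_nat 1) in_Zw_w.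
elim/ltn_ind: r i => -[|[|r]] IH i.
- rewrite (_ : lucas 0 = (2%:R)%:P) // coefC.
  by case: eqP => _; [exact: in_Zw_nat | exact: (in_Zw_nat 0)].
- rewrite (_ : lucas 1 = (1 + w)%:P) // coefC.
  by case: eqP => _; [exact: Z1w | exact: (in_Zw_nat 0)].
have [IH1 IH0] := (IH r.+1 (ltnSn _), IH r (ltnW (ltnSn _))).
rewrite lucasSS coefB coefCM mulrBl coefB coefCM coefXM.
apply/in_ZwB/in_ZwB; [exact: in_ZwM | exact: in_ZwM in_Zw_w _ |].
by case: eqP => _; [exact: (in_Zw_nat 0) | exact: IH0].
Qed.

Lemma Gw_in_Zw m s : (s < m)%N -> in_Zw (Gw m s).
Proof.
elim/ltn_ind: s => s IH ltsm; rewrite Gw_rec //.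
have Zsign k : in_Zw ((-1) ^+ k) by apply/in_ZwX/(in_Zw_int (-1)).
have Zprod a b : in_Zw (\prod_(a <= i < b) (1 + w ^+ (m - i))).
  by apply: in_Zw_prod => i _; apply/in_ZwD/in_ZwX/in_Zw_w; exact: (in_Zw_nat 1).
apply/in_ZwM/in_ZwB => //; first by apply/in_ZwM => //; exact: in_Zw_nat.
rewrite big_nat; apply: in_Zw_sum => k /andP[_ ltks].
by apply/in_ZwM/lucas_coef_in_Zw/in_ZwM/Zprod/in_ZwM/IH/(ltn_trans ltks).
Qed.

End RationalIdentity.

Lemma q_tofrac : q = FracField.tofrac ('X^2 : {poly int}).
Proof. by rewrite /q /t tofracXn. Qed.

Lemma natr_tofrac (n : nat) : n%:R = FracField.tofrac (n%:R : {poly int}).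
Proof. by rewrite rmorph_nat. Qed.

Lemma K_char0 : [pchar K] =i pred0.
Proof.
apply/pcharf0P => n; rewrite natr_tofrac tofrac_eq0 -polyC_natr polyC_eq0.
by rewrite pnatr_eq0.
Qed.

Lemma oneqX_neq0 a : 1 + q ^+ a != 0.
Proof.
rewrite q_tofrac -tofrac1 -tofracXn -tofracD tofrac_eq0; apply: contraTneq isT => e.
by have := congr1 (horner^~ 1) e; rewrite !hornerE !expr1n.
Qed.

Lemma q_notnat (n : nat) : q != n%:R.
Proof.
rewrite q_tofrac natr_tofrac tofrac_eq -polyC_natr; apply/eqP => e.
have := congr1 (fun p : {poly int} => size p) e.
by rewrite size_polyXn size_polyC; case: (_ != 0).
Qed.

Lemma Tmn_even_rec m n :
  Tmn (2 * m) n.+1 = ((1 - q ^+ n.+1) / (1 - q)) ^+ (2 * m) - q ^+ m * Tmn (2 * m) n.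
Proof.
rewrite /Tmn big_nat_recr //= addrC subnn expr0 mul1r muln0 expr0 mulr1; congr (_ + _).
rewrite mulr_sumr -sumrN; apply: eq_big_nat => k /andP[_ ltkn].
rewrite subSn; last by rewrite -ltnS.
rewrite exprS mulnS exprD (_ : q ^+ m = t ^+ (2 * m)); last by rewrite /q -exprM.
ring.
Qed.

Lemma Tmn_even_Rsum m n : (0 < m)%N -> Tmn (2 * m) n = Rsum q m (q ^+ n).
Proof.
move=> m_gt0; elim: n => [|n IH].
  rewrite /Tmn big_geq // /Rsum big1_seq // => k /andP[_]; rewrite mem_index_iota => /andP[_ ltkm].
  rewrite expr0 subrr expr0n (_ : (m - k == 0)%N = false) ?mul0r ?mulr0 ?mul0r //.
  by apply/negbTE; rewrite subn_eq0 -ltnNge.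
rewrite Tmn_even_rec IH exprSr.
have := Rsum_dilation K_char0 oneqX_neq0 q_notnat (q ^+ n.+1) m_gt0.
by rewrite exprSr mulfK ?(q_notnat 0) // => <-; rewrite addrK.
Qed.

Theorem theorem1p3 (m n : nat) (hm : (1 <= m)%N) (hn : (1 <= n)%N) :
  (forall s : nat, (s <= m - 1)%N -> exists p : {poly int}, Gms m s = evalq p) /\
  Tmn (2 * m) n =
    \sum_(0 <= k < m)
      (-1) ^+ k * Gms m k *
      ((1 - q ^+ n) ^+ (m - k) * (1 - q ^+ n.+1) ^+ (m - k) * q ^+ (k * n)) /
      ((1 - q) ^+ (2 * m - 2 * k) * \prod_(0 <= i < k.+1) (1 + q ^+ (m - i))).
Proof.
split=> [s les | ].
  by apply: (Gw_in_Zw K_char0 oneqX_neq0 q_notnat); lia.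
rewrite Tmn_even_Rsum // /Rsum; apply: eq_big_nat => k _.
by rewrite exprS (mulnC k n) exprM.
Qed.
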